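(* Let $\Gamma$ be a distance-regular graph with classical parameters $(D,b,\alpha,\beta)$ such that $b\ge2$, $b-1\ge\alpha\ge1$ and $D\ge3$, geometric with respect to a set $\mathcal C$ of Delsarte cliques. Let $r=[D]$. Assume that for every vertex $x$ the local graph at $x$ is the $\alpha$-clique extension of a $\frac{\beta}{\alpha}\times r$-grid, and assume $\beta>\alpha r$. Then: (a) for every assembly $M$ and every vertex $x$ at distance $i$ from $M$ ($i=0,1,\dots,D$), the number of vertices of $M$ at distance $i$ from $x$ equals $1+\alpha[i]$; (b) for every two vertices $x,y$ at distance $j$ ($j=1,\dots,D$), the number of assemblies containing $y$ at distance $j-1$ from $x$ equals $[j]$; (c) for every two vertices $x,y$ at distance $h$ ($h=0,1,\dots,D-1$), the subgraph induced on $B_h(x,y)=\Gamma_{h+1}(x)\cap\Gamma(y)$ is the $\alpha$-clique extension of a $(\frac{\beta}{\alpha}-[h])\times(r-[h])$-grid.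
   Context: Distance-regular graph with intersection numbers $b_i,c_i$, valency $k=b_0$; $\Gamma_i(x)$ is the set of vertices at distance $i$ from $x$, $\Gamma(y)=\Gamma_1(y)$. For integer $b\ne1$, $[j]=\frac{b^j-1}{b-1}$. Classical parameters $(D,b,\alpha,\beta)$: diameter $D$, $b_i=([D]-[i])(\beta-\alpha[i])$, $c_i=[i](1+\alpha[i-1])$. A Delsarte clique is a clique with $1+\frac{k}{-\theta_{\min}}$ vertices, $\theta_{\min}$ the smallest adjacency eigenvalue; geometric with respect to $\mathcal C$ means every edge lies in exactly one member of $\mathcal C$. An assembly is a maximal clique of $\Gamma$ not in $\mathcal C$. Distance from a vertex to a set $T$: $d(x,T)=\min_{y\in T}d(x,y)$. The $m\times n$-grid is $K_m\Box K_n$; the $s$-clique extension of $\Delta$ replaces each vertex by an $s$-clique, vertices in distinct cliques being adjacent iff the original vertices are adjacent. *)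

From HB Require Import structures.
From mathcomp Require Import all_boot all_order all_algebra all_field.
Set Implicit Arguments. Unset Strict Implicit. Unset Printing Implicit Defensive.
Import Order.TTheory GRing.Theory Num.Theory.

Section Graphs.
Variables (T : finType) (adj : rel T).

Definition simple_graph := symmetric adj /\ irreflexive adj.

Definition nbhd (y : T) : {set T} := [set z | adj y z].

Fixpoint ball (n : nat) (x : T) : {set T} :=
  if n is n'.+1 then ball n' x :|: \bigcup_(z in ball n' x) nbhd z
  else [set x].

Definition connected_graph := forall x y : T, y \in ball #|T| x.

(* graph distance (meaningful for connected graphs: least n with y in ball n x) *)
Definition dist (x y : T) : nat := find (fun n => y \in ball n x) (iota 0 #|T|.+1).

Definition sphere (i : nat) (x : T) : {set T} := [set z | dist x z == i].

Definition setdist (x : T) (M : {set T}) : nat :=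
  \big[minn/#|T|]_(y in M) dist x y.

Definition is_clique (C : {set T}) : bool :=
  [forall u in C, forall v in C, (u != v) ==> adj u v].

Definition is_maximal_clique (C : {set T}) : bool :=
  is_clique C && [forall C' : {set T}, (is_clique C' && (C \subset C')) ==> (C' == C)].

Definition adj_mx : 'M[algC]_#|T| :=
  \matrix_(i, j) ((adj (enum_val i) (enum_val j))%:R)%R.

Definition min_eigenvalue (theta : algC) :=
  eigenvalue adj_mx theta /\ forall mu, eigenvalue adj_mx mu -> (theta <= mu)%R.

Definition delsarte_clique (k : nat) (C : {set T}) :=
  is_clique C /\
  exists theta, min_eigenvalue theta /\ (#|C|%:R : algC)%R = (1 + k%:R / (- theta))%R.

Definition geometric (k : nat) (Cs : {set {set T}}) :=
  (forall C, C \in Cs -> delsarte_clique k C) /\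
  (forall u v, adj u v -> exists! C, C \in Cs /\ u \in C /\ v \in C).

Definition assembly (Cs : {set {set T}}) (M : {set T}) : bool :=
  is_maximal_clique M && (M \notin Cs).

End Graphs.

Definition qint (b j : nat) : nat := (b ^ j - 1) %/ (b - 1).

Definition has_diameter (T : finType) (adj : rel T) (D : nat) :=
  (forall x y : T, dist adj x y <= D) /\ exists x y : T, dist adj x y = D.

(* distance-regular with classical parameters (D, b, alpha, beta):
   b_i = ([D]-[i])(beta - alpha [i]),  c_i = [i](1 + alpha [i-1]) *)
Definition drg_classical (T : finType) (adj : rel T) (D b alpha beta : nat) :=
  [/\ simple_graph adj, connected_graph adj, has_diameter adj D,
      (forall (i : nat) (x y : T), i <= D -> dist adj x y = i ->
         #|sphere adj i.+1 x :&: nbhd adj y| =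
           (qint b D - qint b i) * (beta - alpha * qint b i))
    & (forall (i : nat) (x y : T), 1 <= i <= D -> dist adj x y = i ->
         #|sphere adj i.-1 x :&: nbhd adj y| =
           qint b i * (1 + alpha * qint b i.-1))].

(* adjacency in the s-clique extension of the m x n grid K_m [] K_n,
   vertex set 'I_m * 'I_n * 'I_s: distinct vertices are adjacent iff their
   grid vertices are equal (same clique) or adjacent in the grid *)
Definition clique_ext_grid_adj (m n s : nat) (u v : 'I_m * 'I_n * 'I_s) : bool :=
  (u != v) &&
  [|| (u.1 == v.1),
      ((u.1.1 == v.1.1) && (u.1.2 != v.1.2))
    | ((u.1.1 != v.1.1) && (u.1.2 == v.1.2))].

Definition induced_iso_clique_ext_grid (T : finType) (adj : rel T) (S : {set T})
    (s m n : nat) :=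
  exists f : 'I_m * 'I_n * 'I_s -> T,
    [/\ injective f, f @: setT = S &
        forall u v, adj (f u) (f v) = clique_ext_grid_adj u v].

(* Identify the neighbourhood of a vertex y with the alpha-clique extension of
   the m x r grid (m = beta/alpha, r = [D]).  The maximal cliques through y are
   y plus a row (r alpha + 1 vertices) or y plus a column (beta + 1 vertices).
   The columns form a partial linear space with r lines on every vertex, so
   A + rI = N N^T for its incidence matrix N, theta_min >= -r, and every Delsarte clique has at
   least beta + 1 vertices: the Delsarte cliques are the columns and the
   assemblies are the rows.

   Part (a) is proved for all maximal cliques K, by induction on h = d(x, K),
   with y a vertex of K at distance h from x.
   The c_h neighbours of y in Gamma_{h-1}(x) lie in the rows meeting
   Gamma_{h-1}(x), each containing 1 + alpha [h-1] of them by induction, so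
   exactly [h] rows, and likewise [h] columns, meet Gamma_{h-1}(x).  A vertex
   of B_h(x, y) shares no row or column with Gamma_{h-1}(x), and since
   b_h = alpha (m - [h]) (r - [h]) it is exactly the grid on the remaining rows
   and columns: this is (c).  A row at distance h from x then meets Gamma_h(x)
   in y and the alpha [h] vertices lying in the [h] columns meeting
   Gamma_{h-1}(x), which is (a) at h; the [j] rows through y meeting
   Gamma_{j-1}(x) are the assemblies counted in (b). *)

From Pilot Require Import Defs.
From HB Require Import structures.
From mathcomp Require Import all_boot all_order all_algebra all_field.
From mathcomp Require Import zify ring.
Set Implicit Arguments. Unset Strict Implicit. Unset Printing Implicit Defensive.
Import Order.TTheory GRing.Theory Num.Theory.

Section GraphDistance.
Variables (T : finType) (adj : rel T).
Local Notation dist := (dist adj).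

Lemma mem_ballS n x z w : z \in ball adj n x -> adj z w -> w \in ball adj n.+1 x.
Proof.
move=> zx azw; rewrite /= inE; apply/orP; right.
by apply/bigcupP; exists z; rewrite ?inE.
Qed.

Lemma dist_leq_ball n x y : y \in ball adj n x -> dist x y <= n.
Proof.
move=> yx; rewrite /Defs.dist; case: (leqP n #|T|) => hn.
  rewrite leqNgt; apply/negP => /(before_find 0).
  by rewrite nth_iota ?add0n ?yx //; lia.
by apply: leq_trans (find_size _ _) _; rewrite size_iota.
Qed.

Lemma distxx x : dist x x = 0.
Proof. by apply/eqP; rewrite -leqn0; apply: dist_leq_ball; rewrite /= inE. Qed.

Lemma setdist_leq x (M : {set T}) z : z \in M -> setdist adj x M <= dist x z.
Proof.
by move=> zM; rewrite /setdist -minEnat; apply: (bigmin_le_cond _ (dist x) zM).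
Qed.

Hypothesis Hconn : connected_graph adj.

Lemma mem_ball_dist x y : y \in ball adj (dist x y) x.
Proof.
have yx : has (fun n => y \in ball adj n x) (iota 0 #|T|.+1).
  by apply/hasP; exists #|T|; [rewrite mem_iota; lia | apply: Hconn].
have := nth_find 0 yx; rewrite nth_iota ?add0n //.
by rewrite -[X in _ < X](size_iota 0 #|T|.+1) -has_find.
Qed.

Lemma dist_eq0 x y : dist x y = 0 -> y = x.
Proof. by move=> d0; have := mem_ball_dist x y; rewrite d0 /= inE => /eqP. Qed.

Lemma dist_adj_leS x y z : adj y z -> dist x z <= (dist x y).+1.
Proof. by move=> ayz; apply/dist_leq_ball/mem_ballS/ayz/mem_ball_dist. Qed.

Lemma dist_adj_between (Hsym : symmetric adj) x y z : adj y z ->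
  (dist x y).-1 <= dist x z <= (dist x y).+1.
Proof.
move=> ayz; rewrite dist_adj_leS // andbT.
by have := dist_adj_leS x (y := z) (z := y); rewrite Hsym => /(_ ayz); lia.
Qed.

Lemma setdist_witness x (M : {set T}) z0 : z0 \in M ->
  exists2 z, z \in M & setdist adj x M = dist x z.
Proof.
move=> z0M; rewrite /setdist -minEnat.
rewrite (bigmin_eq_arg _ _ _ _ z0M) => [|z _]; last exact: dist_leq_ball (Hconn x z).
by case: Order.TotalTheory.arg_minP => //= z zM _; exists z.
Qed.

Lemma setdist_eq x (M : {set T}) n :
  (exists2 z, z \in M & dist x z = n) -> (forall z, z \in M -> n <= dist x z) ->
  setdist adj x M = n.
Proof.
case=> z zM <- ge_n; apply/eqP; rewrite eqn_leq setdist_leq //.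
by have [w wM ->] := setdist_witness x zM; apply: ge_n.
Qed.

End GraphDistance.

Lemma cliqueP (T : finType) (adj : rel T) (C : {set T}) :
  reflect (forall u v, u \in C -> v \in C -> u != v -> adj u v) (is_clique adj C).
Proof.
apply: (iffP forall_inP) => [h u v uC vC | h u uC].
  by have /forall_inP/(_ v vC)/implyP := h u uC.
by apply/forall_inP => v vC; apply/implyP; apply: h.
Qed.

Lemma maximal_clique_eq (T : finType) (adj : rel T) (K C : {set T}) :
  is_maximal_clique adj K -> is_clique adj C -> K \subset C -> C = K.
Proof. by case/andP=> _ /forallP /(_ C) + Cc KC; rewrite Cc KC => /eqP. Qed.

Lemma maximal_clique_neq0 (T : finType) (adj : rel T) (K : {set T}) (x : T) :
  is_maximal_clique adj K -> exists z, z \in K.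
Proof.
move=> Kmax; case: (set_0Vmem K) => [K0|[z zK]]; last by exists z.
have x_clique : is_clique adj [set x].
  by apply/cliqueP => u v /set1P -> /set1P ->; rewrite eqxx.
have := maximal_clique_eq Kmax x_clique; rewrite K0 sub0set => /(_ isT) /setP /(_ x).
by rewrite !inE eqxx.
Qed.

Lemma clique_ext_grid_adjE m n s (u v : 'I_m * 'I_n * 'I_s) :
  clique_ext_grid_adj u v = (u != v) && ((u.1.1 == v.1.1) || (u.1.2 == v.1.2)).
Proof.
case: u v => [[a c] d] [[a' c'] d']; rewrite /clique_ext_grid_adj /= !xpair_eqE.
by case: (a =P a'); case: (c =P c').
Qed.

Definition grid_swap {m n s} (u : 'I_m * 'I_n * 'I_s) : 'I_n * 'I_m * 'I_s :=
  ((u.1.2, u.1.1), u.2).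

Lemma grid_swapK m n s : cancel (@grid_swap m n s) (@grid_swap n m s).
Proof. by case=> [[]]. Qed.

Lemma clique_ext_grid_adj_swap m n s (u v : 'I_m * 'I_n * 'I_s) :
  clique_ext_grid_adj (grid_swap u) (grid_swap v) = clique_ext_grid_adj u v.
Proof. by rewrite !clique_ext_grid_adjE (can_eq (@grid_swapK _ _ _)) orbC. Qed.

Lemma card_grid_block m n s (A : {set 'I_m}) (B : {set 'I_n}) :
  #|[set u : 'I_m * 'I_n * 'I_s | (u.1.1 \in A) && (u.1.2 \in B)]| = #|A| * #|B| * s.
Proof.
have -> : [set u : 'I_m * 'I_n * 'I_s | (u.1.1 \in A) && (u.1.2 \in B)] =
          setX (setX A B) setT by apply/setP => -[[a c] d]; rewrite !inE andbT.
by rewrite !cardsX cardsT card_ord.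
Qed.

Lemma induced_iso_grid_block (T : finType) (adj : rel T) m n s
    (g : 'I_m * 'I_n * 'I_s -> T) (A : {set 'I_m}) (B : {set 'I_n}) :
  injective g -> (forall u v, adj (g u) (g v) = clique_ext_grid_adj u v) ->
  induced_iso_clique_ext_grid adj
    (g @: [set u | (u.1.1 \in A) && (u.1.2 \in B)]) s #|A| #|B|.
Proof.
move=> g_inj g_adj.
pose e (u : 'I_#|A| * 'I_#|B| * 'I_s) := ((enum_val u.1.1, enum_val u.1.2), u.2).
have e_inj : injective e.
  by move=> [[a c] d] [[a' c'] d'] [/enum_val_inj -> /enum_val_inj -> ->].
exists (g \o e); split.
- exact: inj_comp g_inj e_inj.
- apply/setP => z; apply/imsetP/imsetP => [[u _ ->]|[v]].
    by exists (e u); rewrite // inE !enum_valP.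
  case: v => [[a c] d]; rewrite inE /= => /andP [aA cB] ->.
  by exists ((enum_rank_in aA a, enum_rank_in cB c), d); rewrite //= /e /= !enum_rankK_in.
- move=> u v; rewrite g_adj !clique_ext_grid_adjE (inj_eq e_inj) /=.
  by rewrite !(inj_eq enum_val_inj).
Qed.

Definition local_chart (T : finType) (adj : rel T) (y : T) m n s
    (g : 'I_m * 'I_n * 'I_s -> T) :=
  [/\ injective g, g @: setT = nbhd adj y &
      forall u v, adj (g u) (g v) = clique_ext_grid_adj u v].

Definition chart_row (T : finType) (y : T) m n s (g : 'I_m * 'I_n * 'I_s -> T)
  (i : 'I_m) : {set T} := y |: g @: [set u | u.1.1 == i].

Definition chart_col (T : finType) (y : T) m n s (g : 'I_m * 'I_n * 'I_s -> T)
  (j : 'I_n) : {set T} := y |: g @: [set u | u.1.2 == j].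

Section Chart.
Variables (T : finType) (adj : rel T) (y : T) (m n s : nat).
Variable g : 'I_m * 'I_n * 'I_s -> T.
Hypotheses (Hsym : symmetric adj) (Hirr : irreflexive adj).
Hypothesis Hg : local_chart adj y g.

Lemma chart_inj : injective g. Proof. by case: Hg. Qed.

Lemma chart_adjE u v : adj (g u) (g v) = clique_ext_grid_adj u v.
Proof. by case: Hg. Qed.

Lemma chart_adj u : adj y (g u).
Proof. by case: Hg => _ g_onto _; have := imset_f g (in_setT u); rewrite g_onto inE. Qed.

Lemma chart_onto z : adj y z -> exists u, z = g u.
Proof.
case: Hg => _ g_onto _ ayz.
have /imsetP [u _ ->] : z \in g @: setT by rewrite g_onto inE.
by exists u.
Qed.

Lemma chart_neqy u : (g u == y) = false.
Proof. by apply/negbTE/eqP => gu_y; have := chart_adj u; rewrite gu_y Hirr. Qed.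

Lemma mem_chart_img (P : pred ('I_m * 'I_n * 'I_s)) u :
  (g u \in g @: [set v | P v]) = P u.
Proof. by rewrite (mem_imset _ _ chart_inj) inE. Qed.

Lemma mem_chart_row u i : (g u \in chart_row y g i) = (u.1.1 == i).
Proof. by rewrite !inE chart_neqy mem_chart_img. Qed.

Lemma mem_chart_col u j : (g u \in chart_col y g j) = (u.1.2 == j).
Proof. by rewrite !inE chart_neqy mem_chart_img. Qed.

Lemma chart_row_clique i : is_clique adj (chart_row y g i).
Proof.
apply/cliqueP => a c /setU1P [->|/imsetP [u + ->]] /setU1P [->|/imsetP [v + ->]].
- by rewrite eqxx.
- by move=> _ _; apply: chart_adj.
- by move=> _ _; rewrite Hsym chart_adj.
rewrite !inE => /eqP ui /eqP vi uv; rewrite chart_adjE clique_ext_grid_adjE ui vi eqxx.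
by rewrite andbT; apply: contraNneq uv => ->.
Qed.

Lemma card_chart_row i : #|chart_row y g i| = (n * s).+1.
Proof.
rewrite cardsU1 (card_imset _ chart_inj).
have -> : [set u : 'I_m * 'I_n * 'I_s | u.1.1 == i] =
          [set u | (u.1.1 \in [set i]) && (u.1.2 \in setT)].
  by apply/setP => u; rewrite !inE andbT.
rewrite card_grid_block cards1 cardsT card_ord mul1n.
by case: imsetP => // -[u _ /eqP]; rewrite eq_sym chart_neqy.
Qed.

Lemma chart_row_inj : 0 < n -> 0 < s -> injective (chart_row y g).
Proof.
move=> n0 s0 i i' ii'; pose u := ((i, Ordinal n0), Ordinal s0).
by have := mem_chart_row u i'; rewrite -ii' mem_chart_row eqxx => /esym/eqP.
Qed.

Lemma clique_sub_chart_line (K : {set T}) u0 :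
  is_clique adj K -> y \in K -> g u0 \in K ->
  K \subset chart_row y g u0.1.1 \/ K \subset chart_col y g u0.1.2.
Proof.
move=> /cliqueP Kc yK u0K.
have K_chart z : z \in K -> z != y -> exists u, z = g u.
  by move=> zK zy; apply: chart_onto; apply: Kc; rewrite // eq_sym.
have collinear u v : g u \in K -> g v \in K -> u != v -> (u.1.1 == v.1.1) || (u.1.2 == v.1.2).
  move=> uK vK uv; have := Kc _ _ uK vK; rewrite (inj_eq chart_inj) uv chart_adjE.
  by rewrite clique_ext_grid_adjE uv => /(_ isT).
have [|/subsetPn [w wK]] := boolP (K \subset chart_row y g u0.1.1); first by left.
have [->|wy] := eqVneq w y; first by rewrite setU11.
have [v ew] := K_chart w wK wy; subst w; rewrite mem_chart_row => v_row.
have v_col : v.1.2 == u0.1.2.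
  have vu0 : v != u0 by apply: contraNneq v_row => ->.
  by have := collinear v u0 wK u0K vu0; rewrite (negbTE v_row).
right; apply/subsetP => z zK; have [->|zy] := eqVneq z y; first by rewrite setU11.
have [u ez] := K_chart z zK zy; subst z; rewrite mem_chart_col.
apply/contraT => u_col.
have u_row : u.1.1 == u0.1.1.
  have uu0 : u != u0 by apply: contraNneq u_col => ->.
  by have := collinear u u0 zK u0K uu0; rewrite (negbTE u_col) orbF.
have uv : u != v by apply: contraNneq u_col => ->.
have := collinear u v zK wK uv; rewrite (eqP u_row) (eqP v_col) eq_sym.
by rewrite (negbTE v_row) (negbTE u_col).
Qed.

Lemma chart_row_maximal i : 1 < n -> 0 < s -> is_maximal_clique adj (chart_row y g i).
Proof.
move=> n1 s0; rewrite /is_maximal_clique chart_row_clique /=.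
apply/forallP => C; apply/implyP => /andP [Cc rowC].
pose u0 := ((i, Ordinal (ltnW n1)), Ordinal s0).
pose u1 := ((i, Ordinal n1), Ordinal s0).
have in_C u : u.1.1 == i -> g u \in C.
  by move=> ui; apply: (subsetP rowC); rewrite mem_chart_row.
have [CK|/subsetP colC] := clique_sub_chart_line Cc (subsetP rowC y (setU11 _ _)) (in_C u0 (eqxx _)).
  by rewrite eqEsubset CK rowC.
by have := colC _ (in_C u1 (eqxx _)); rewrite mem_chart_col.
Qed.

End Chart.

Lemma local_chart_swap (T : finType) (adj : rel T) (y : T) m n s
    (g : 'I_m * 'I_n * 'I_s -> T) :
  local_chart adj y g -> local_chart adj y (g \o grid_swap).
Proof.
case=> g_inj g_onto g_adj; split.
- exact: inj_comp g_inj (can_inj (@grid_swapK _ _ _)).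
- rewrite -g_onto; apply/setP => z.
  apply/imsetP/imsetP => -[u _ ->]; exists (grid_swap u) => //=.
  by rewrite grid_swapK.
- by move=> u v; rewrite /= g_adj -clique_ext_grid_adj_swap !grid_swapK.
Qed.

Lemma chart_col_swap (T : finType) (y : T) m n s (g : 'I_m * 'I_n * 'I_s -> T) j :
  chart_col y g j = chart_row y (g \o grid_swap) j.
Proof.
congr (_ |: _); apply/setP => z.
apply/imsetP/imsetP => -[u uj ->]; exists (grid_swap u); rewrite /= ?grid_swapK //.
all: by move: uj; rewrite !inE.
Qed.

Section ChartColumns.
Variables (T : finType) (adj : rel T) (y : T) (m n s : nat).
Variable g : 'I_m * 'I_n * 'I_s -> T.
Hypotheses (Hsym : symmetric adj) (Hirr : irreflexive adj).
Hypothesis Hg : local_chart adj y g.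

Lemma chart_col_clique j : is_clique adj (chart_col y g j).
Proof. by rewrite chart_col_swap; apply/chart_row_clique/local_chart_swap. Qed.

Lemma card_chart_col j : #|chart_col y g j| = (m * s).+1.
Proof. by rewrite chart_col_swap (card_chart_row Hirr (local_chart_swap Hg)). Qed.

Lemma chart_col_inj : 0 < m -> 0 < s -> injective (chart_col y g).
Proof.
move=> m0 s0 j j'; rewrite !chart_col_swap.
exact: (chart_row_inj Hirr (local_chart_swap Hg)).
Qed.

Lemma maximal_clique_chart (K : {set T}) : is_maximal_clique adj K -> y \in K -> 0 < m ->
  (exists i, K = chart_row y g i) \/ (exists j, K = chart_col y g j).
Proof.
move=> Kmax yK m0; have Kc : is_clique adj K by case/andP: Kmax.
have [/existsP [u0 u0K]|no_chart] := boolP [exists u, g u \in K].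
  case: (clique_sub_chart_line Hirr Hg Kc yK u0K) => KC; [left; exists u0.1.1 | right; exists u0.1.2];
    apply/esym/(maximal_clique_eq Kmax) => //; [exact: chart_row_clique | exact: chart_col_clique].
left; exists (Ordinal m0); apply/esym/(maximal_clique_eq Kmax); first exact: chart_row_clique.
apply/subsetP => z zK; have [->|zy] := eqVneq z y; first by rewrite setU11.
have yz : y != z by rewrite eq_sym.
have [u ez] := chart_onto Hg ((cliqueP _ _ Kc) _ _ yK zK yz).
by move/existsPn: no_chart => /(_ u); rewrite -ez zK.
Qed.

End ChartColumns.

Lemma qint0 b : qint b 0 = 0.
Proof. by rewrite /qint expn0 subnn div0n. Qed.

Lemma qint_gt1 b D : 1 < b -> 1 < D -> 1 < qint b D.
Proof.
move=> b1; case: D => [|[|D]] // _.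
rewrite /qint !subn1 predn_exp mulKn; last by case: b b1 => [|[]].
by rewrite !big_ord_recl expn0 ltnS addn_gt0 expn_gt0 ltnW.
Qed.

Section Spectral.
Local Open Scope ring_scope.
Variables (T : finType) (adj : rel T).

Lemma eigenvalue_ge_lines (Ls : {set {set T}}) (r : nat) (th : algC) :
  (forall x y, #|[set L in Ls | (x \in L) && (y \in L)]| = ((x == y) * r + adj x y)%N) ->
  eigenvalue (adj_mx adj) th -> 0 <= th + r%:R.
Proof.
move=> card_lines /eigenvalueP [v Hv v_neq0].
pose w i := v 0 i.
pose c (L : {set T}) (i : 'I_#|T|) : algC := (enum_val i \in L)%:R.
pose sL L := \sum_i c L i * w i.
pose N := \sum_i w i * (w i)^*.
have incidence i j : \sum_(L in Ls) c L i * c L j = (i == j)%:R * r%:R + adj_mx adj i j.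
  rewrite mxE -(inj_eq enum_val_inj) -natrM -natrD -card_lines -sum1dep_card natr_sum.
  rewrite big_mkcondr /=; apply: eq_bigr => L _ /=; rewrite /c.
  by case: (enum_val i \in L); case: (enum_val j \in L); rewrite ?mul0r ?mul1r.
have gram : \sum_(L in Ls) sL L * (sL L)^* = (th + r%:R) * N.
  have -> : \sum_(L in Ls) sL L * (sL L)^* =
            \sum_(L in Ls) \sum_i \sum_j (c L i * c L j) * (w i * (w j)^*).
    apply: eq_bigr => L _; rewrite /sL rmorph_sum big_distrlr /=.
    apply: eq_bigr => i _; apply: eq_bigr => j _.
    by rewrite rmorphM /c rmorph_nat; ring.
  rewrite exchange_big /=; under eq_bigr => i _ do rewrite exchange_big /=.
  under eq_bigr => i _ do under eq_bigr => j _ do rewrite -mulr_suml incidence mulrDl.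
  under eq_bigr => i _ do rewrite big_split /=.
  rewrite big_split /= addrC mulrDl; congr (_ + _).
    rewrite /N mulr_sumr exchange_big /=; apply: eq_bigr => j _.
    have : (v *m adj_mx adj) 0 j = th * w j by rewrite Hv mxE.
    rewrite mxE => vA_j; rewrite mulrA -vA_j mulr_suml; apply: eq_bigr => i _.
    by rewrite /w; ring.
  rewrite /N mulr_sumr; apply: eq_bigr => i _.
  rewrite (bigD1 i) //= eqxx mul1r big1 ?addr0 // => j /negbTE ji.
  by rewrite eq_sym ji !mul0r.
have [j wj] : exists j, w j != 0.
  apply/existsP; apply: contraR v_neq0 => /existsPn w0.
  by apply/eqP/rowP => j; rewrite mxE; apply/eqP/negPn/w0.
have N_gt0 : 0 < N.
  have wj_gt0 : 0 < w j * (w j)^* by rewrite lt_def mul_conjC_eq0 wj mul_conjC_ge0.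
  rewrite /N (bigD1 j) //=; apply: lt_le_trans wj_gt0 _; rewrite lerDl.
  by apply: sumr_ge0 => i _; apply: mul_conjC_ge0.
have : 0 <= \sum_(L in Ls) sL L * (sL L)^* by apply: sumr_ge0 => L _; apply: mul_conjC_ge0.
by rewrite gram pmulr_lge0.
Qed.

Lemma delsarte_clique_card_gt (r beta : nat) (C : {set T}) :
  (forall th, eigenvalue (adj_mx adj) th -> 0 <= th + r%:R) ->
  delsarte_clique adj (r * beta) C -> (1 < #|C|)%N -> (beta < #|C|)%N.
Proof.
move=> eig_ge [_ [th [[eig_th _] cardC]]] C_gt1.
rewrite -(ltr_nat algC) cardC; rewrite -(ltr_nat algC) cardC mulr1n ltrDl in C_gt1.
set t := - th in cardC C_gt1 *.
have t_le_r : t <= r%:R by rewrite /t lerNl -subr_ge0 opprK; apply: eig_ge.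
have k_gt0 : 0 < (r * beta)%:R :> algC.
  by rewrite ltr0n lt0n; apply: contraTneq C_gt1 => ->; rewrite mul0r ltxx.
have t_gt0 : 0 < t by rewrite -invr_gt0 -(pmulr_rgt0 _ k_gt0).
rewrite -[beta%:R]add0r; apply: ltr_leD; first exact: ltr01.
rewrite ler_pdivlMr // natrM [X in _ <= X]mulrC.
by apply: ler_wpM2l t_le_r.
Qed.

End Spectral.

Section Main.
Variables (T : finType) (adj : rel T) (D b alpha beta : nat).
Hypothesis Hdrg : drg_classical adj D b alpha beta.
Hypotheses (Halpha : 0 < alpha) (Hdiv : alpha %| beta).
Hypotheses (Hr : 1 < qint b D) (Hbig : alpha * qint b D < beta).
Hypothesis Hloc : forall x : T,
  induced_iso_clique_ext_grid adj (nbhd adj x) alpha (beta %/ alpha) (qint b D).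

Local Notation m := (beta %/ alpha).
Local Notation r := (qint b D).
Local Notation dist := (dist adj).

Lemma drg_sym : symmetric adj. Proof. by case: Hdrg => -[]. Qed.
Lemma drg_irr : irreflexive adj. Proof. by case: Hdrg => -[]. Qed.
Lemma drg_conn : connected_graph adj. Proof. by case: Hdrg. Qed.
Lemma drg_dist_le x y : dist x y <= D.
Proof. by case: Hdrg => _ _ [dist_le _] _ _; apply: dist_le. Qed.

Lemma drg_card_up i x y : i <= D -> dist x y = i ->
  #|sphere adj i.+1 x :&: nbhd adj y| = (r - qint b i) * (beta - alpha * qint b i).
Proof. by case: Hdrg => _ _ _ + _; apply. Qed.

Lemma drg_card_down i x y : 1 <= i <= D -> dist x y = i ->
  #|sphere adj i.-1 x :&: nbhd adj y| = qint b i * (1 + alpha * qint b i.-1).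
Proof. by case: Hdrg => _ _ _ _; apply. Qed.

Lemma beta_eq : beta = alpha * m. Proof. by rewrite mulnC divnK. Qed.

Lemma m_gt1 : 1 < m.
Proof. by apply: ltn_trans Hr _; rewrite -(ltn_pmul2l Halpha) -beta_eq. Qed.

Lemma chart_exists x : exists g : 'I_m * 'I_r * 'I_alpha -> T, local_chart adj x g.
Proof. exact: Hloc. Qed.

Definition nearest_layer_card h := forall (K : {set T}) x,
  is_maximal_clique adj K -> setdist adj x K = h ->
  #|[set z in K | dist x z == h]| = 1 + alpha * qint b h.

Lemma nearest_layer_card0 : nearest_layer_card 0.
Proof.
move=> K x Kmax Kx; have [z0 z0K] := maximal_clique_neq0 x Kmax.
have [z zK] := setdist_witness drg_conn x z0K; rewrite Kx => /esym/(dist_eq0 drg_conn) zx.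
have -> : [set z in K | dist x z == 0] = [set x].
  apply/setP => w; rewrite !inE; apply/andP/eqP => [[_ /eqP /(dist_eq0 drg_conn)] //|->].
  by rewrite -zx zK zx distxx.
by rewrite cards1 qint0 muln0.
Qed.

Definition down_rows x h m1 n1 (g : 'I_m1 * 'I_n1 * 'I_alpha -> T) : {set 'I_m1} :=
  [set i | [exists u, (u.1.1 == i) && (dist x (g u) == h.-1)]].

Section Layers.
Variables (x y : T) (h m1 n1 : nat) (g : 'I_m1 * 'I_n1 * 'I_alpha -> T).
Hypotheses (Hg : local_chart adj y g) (Hxy : dist x y = h).

Lemma sphere_nbhd_chart k :
  sphere adj k x :&: nbhd adj y = g @: [set u | dist x (g u) == k].
Proof.
apply/setP => z; rewrite !inE; apply/andP/imsetP => [[dz ayz]|[u + ->]].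
  by have [u ez] := chart_onto Hg ayz; subst z; exists u; rewrite // inE.
by rewrite inE => du; split; last exact: chart_adj Hg u.
Qed.

Lemma chart_dist u : h.-1 <= dist x (g u) <= h.+1.
Proof. by rewrite -Hxy; apply: dist_adj_between drg_conn drg_sym x _ _ (chart_adj Hg u). Qed.

Lemma chart_down_pos u : dist x (g u) = h.-1 -> 0 < h.
Proof.
move=> du; rewrite lt0n; apply/eqP => h0; move: du Hxy; rewrite h0.
move=> /(dist_eq0 drg_conn) gux /(dist_eq0 drg_conn) yx.
by have := chart_neqy drg_irr Hg u; rewrite gux yx eqxx.
Qed.

Lemma setdist_down_row i :
  i \in down_rows x h g -> setdist adj x (chart_row y g i) = h.-1.
Proof.
rewrite inE => /existsP [u /andP [/eqP ui /eqP du]].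
apply: (setdist_eq drg_conn).
  by exists (g u); rewrite ?(mem_chart_row drg_irr Hg) ?ui.
move=> z /setU1P [->|/imsetP [v _ ->]]; first by rewrite Hxy leq_pred.
by case/andP: (chart_dist v).
Qed.

Lemma card_down_rows : h <= D -> nearest_layer_card h.-1 -> 1 < n1 ->
  #|down_rows x h g| = qint b h.
Proof.
move=> hD IH n1_gt1; have [h0|h_gt0] := posnP h.
  have -> : qint b h = 0 by rewrite h0 qint0.
  apply/eqP; rewrite cards_eq0; apply/eqP/setP => i; rewrite !inE.
  apply/negbTE/negP => /existsP [u /andP [_ /eqP /chart_down_pos]].
  by rewrite h0.
pose layer := [set u | dist x (g u) == h.-1].
have row_layer i : #|[set u | (u \in layer) && (u.1.1 == i)]| =
                   if i \in down_rows x h g then 1 + alpha * qint b h.-1 else 0.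
  case: ifPn => [i_down|i_up].
    have row_max := chart_row_maximal drg_sym drg_irr Hg i n1_gt1 Halpha.
    rewrite -(IH _ x row_max (setdist_down_row i_down)).
    have -> : [set z in chart_row y g i | dist x z == h.-1] =
              g @: [set u | (u \in layer) && (u.1.1 == i)].
      have h_ne : (h == h.-1) = false by apply/negbTE; lia.
      apply/setP => z; rewrite inE.
      apply/andP/imsetP => [[/setU1P [->|/imsetP [u + ->]] dz]|[u + ->]].
      - by rewrite Hxy h_ne in dz.
      - by rewrite inE => ui; exists u; rewrite // !inE dz ui.
      - by rewrite (mem_chart_row drg_irr Hg) !inE => /andP [-> ->].
    by rewrite (card_imset _ (chart_inj Hg)).
  apply/eqP; rewrite cards_eq0; apply/eqP/setP => u; rewrite !inE.
  apply/negbTE; apply: contra i_up => /andP [du ui].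
  by rewrite inE; apply/existsP; exists u; rewrite ui.
have card_layer : #|layer| = #|down_rows x h g| * (1 + alpha * qint b h.-1).
  rewrite -sum1_card (partition_big (fun u => u.1.1) predT) //=.
  under eq_bigr => i _ do rewrite sum1dep_card row_layer.
  by rewrite -big_mkcond sum_nat_const.
have hD' : 1 <= h <= D by rewrite h_gt0.
have := drg_card_down hD' Hxy.
rewrite sphere_nbhd_chart (card_imset _ (chart_inj Hg)) -/layer card_layer.
by move/eqP; rewrite eqn_pmul2r // => /eqP.
Qed.

End Layers.

Section UpLayer.
Variables (x y : T) (h m1 n1 : nat) (g : 'I_m1 * 'I_n1 * 'I_alpha -> T).
Hypotheses (Hg : local_chart adj y g) (Hxy : dist x y = h).
Hypotheses (HhD : h <= D) (IH : nearest_layer_card h.-1).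
Hypothesis Hdims : (m1 = m /\ n1 = r) \/ (m1 = r /\ n1 = m).

Local Notation DR := (down_rows x h g).
Local Notation DC := (down_rows x h (g \o grid_swap)).

Lemma chart_dims_gt1 : 1 < m1 /\ 1 < n1.
Proof. by case: Hdims => -[-> ->]; rewrite m_gt1 Hr. Qed.

Lemma card_down_cols : #|DC| = qint b h.
Proof. exact: card_down_rows (local_chart_swap Hg) Hxy HhD IH chart_dims_gt1.1. Qed.

Lemma card_up_rows_cols : #|~: DR| = m1 - qint b h /\ #|~: DC| = n1 - qint b h.
Proof.
have := card_down_rows Hg Hxy HhD IH chart_dims_gt1.2; have := card_down_cols.
by have := cardsC DR; have := cardsC DC; rewrite !card_ord; lia.
Qed.

Lemma collinear_down_not_up u w : (u.1.1 == w.1.1) || (u.1.2 == w.1.2) ->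
  dist x (g w) = h.-1 -> dist x (g u) != h.+1.
Proof.
move=> uw_line dw; apply/eqP => du.
have h_gt0 := chart_down_pos Hg Hxy dw.
have uw : u != w by apply/eqP => uw; move: du; rewrite uw dw; lia.
have gw_gu : adj (g w) (g u).
  by rewrite (chart_adjE Hg) clique_ext_grid_adjE eq_sym uw (eq_sym w.1.1) (eq_sym w.1.2).
by have := dist_adj_leS drg_conn x gw_gu; rewrite du dw; lia.
Qed.

Lemma up_layer_chart :
  [set u | dist x (g u) == h.+1] = [set u | (u.1.1 \in ~: DR) && (u.1.2 \in ~: DC)].
Proof.
apply/eqP; rewrite eqEcard; apply/andP; split.
  apply/subsetP => u; rewrite !inE => /eqP du; apply/andP; split.
    apply/existsPn => w; apply/negP => /andP [/eqP wu /eqP dw].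
    by have := @collinear_down_not_up u w; rewrite wu eqxx du eqxx => /(_ isT dw).
  apply/existsPn => w; apply/negP => /andP [/eqP wu /eqP dw].
  have := @collinear_down_not_up u (grid_swap w); rewrite /= wu eqxx orbT du eqxx.
  by move=> /(_ isT dw).
have [card_DR card_DC] := card_up_rows_cols.
(* Both sides have b_h = alpha (m - [h]) (r - [h]) elements. *)
rewrite card_grid_block card_DR card_DC -(card_imset _ (chart_inj Hg)) -(sphere_nbhd_chart x Hg).
rewrite drg_card_up // beta_eq -mulnBr.
by case: Hdims => -[-> ->]; apply: eq_leq; ring.
Qed.

Lemma nearest_in_row i : setdist adj x (chart_row y g i) = h ->
  #|[set z in chart_row y g i | dist x z == h]| = 1 + alpha * qint b h.
Proof.
move=> row_h.
have i_up : i \notin DR.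
  apply/negP => i_down; move: (i_down); rewrite inE => /existsP [u /andP [_ /eqP du]].
  have := chart_down_pos Hg Hxy du; have := setdist_down_row Hg Hxy i_down.
  by rewrite row_h; lia.
have up_u u : (dist x (g u) == h.+1) = (u.1.1 \notin DR) && (u.1.2 \notin DC).
  by move/setP/(_ u): up_layer_chart; rewrite !in_set.
have -> : [set z in chart_row y g i | dist x z == h] =
          y |: g @: [set u | (u.1.1 \in [set i]) && (u.1.2 \in DC)].
  apply/setP => z; rewrite inE; have [->|zy] := eqVneq z y.
    by rewrite setU11 (setU11 y) Hxy eqxx.
  rewrite /chart_row !in_setU1 (negbTE zy) /=.
  apply/andP/imsetP => [[/imsetP [u + ->] du]|[u + ->]].
    rewrite inE => /eqP ui; exists u; rewrite // in_set in_set1 ui eqxx /=.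
    by apply/contraT => u_up; have := up_u u; rewrite ui i_up u_up (eqP du); lia.
  move=> /[1!in_set] /andP [/[1!in_set1] /eqP ui u_down].
  split; first by rewrite (mem_chart_img Hg) ui.
  have not_up : dist x (g u) != h.+1 by rewrite up_u u_down andbF.
  have not_down : dist x (g u) != h.-1.
    by apply: contra i_up => du; rewrite inE; apply/existsP; exists u; rewrite ui eqxx.
  by have := chart_dist Hg Hxy u; move: not_up not_down; lia.
rewrite cardsU1 (card_imset _ (chart_inj Hg)) card_grid_block cards1.
case: imsetP => [[u _ /esym/eqP]|_]; first by rewrite (chart_neqy drg_irr Hg).
by rewrite card_down_cols mul1n mulnC.
Qed.
End UpLayer.

Lemma nearest_layer_card_all h : nearest_layer_card h.
Proof.
elim: h => [|h IH]; first exact: nearest_layer_card0.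
move=> K x Kmax Kx; have [z0 z0K] := maximal_clique_neq0 x Kmax.
have [y yK xy] := setdist_witness drg_conn x z0K; rewrite Kx in xy.
have hD : h.+1 <= D by rewrite xy drg_dist_le.
have [g Hg] := chart_exists y.
have [[i eK]|[j eK]] := maximal_clique_chart drg_sym drg_irr Hg Kmax yK (ltnW m_gt1).
  by rewrite eK in Kx *; apply: nearest_in_row Hg (esym xy) hD IH (or_introl _) _ Kx.
rewrite eK chart_col_swap in Kx *.
exact: nearest_in_row (local_chart_swap Hg) (esym xy) hD IH (or_intror _) _ Kx.
Qed.

Lemma nearest_in_maximal_clique (K : {set T}) x : is_maximal_clique adj K ->
  #|[set z in K | dist x z == setdist adj x K]| = 1 + alpha * qint b (setdist adj x K).
Proof. by move=> Kmax; apply: nearest_layer_card_all. Qed.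

Lemma induced_up_layer h x y : h <= D.-1 -> dist x y = h ->
  induced_iso_clique_ext_grid adj (sphere adj h.+1 x :&: nbhd adj y)
    alpha (m - qint b h) (r - qint b h).
Proof.
move=> hD xy; have [g Hg] := chart_exists y.
have hD' : h <= D by apply: leq_trans hD (leq_pred D).
have dims : (m = m /\ r = r) \/ (m = r /\ r = m) by left.
have [<- <-] := card_up_rows_cols Hg xy hD' (@nearest_layer_card_all h.-1) dims.
rewrite (sphere_nbhd_chart x Hg) (up_layer_chart Hg xy hD' (@nearest_layer_card_all h.-1) dims).
exact: induced_iso_grid_block (chart_inj Hg) (chart_adjE Hg).
Qed.

Definition lines : {set {set T}} := [set L | is_clique adj L && (#|L| == beta.+1)].

Section Lines.
Variables (y : T) (g : 'I_m * 'I_r * 'I_alpha -> T).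
Hypothesis Hg : local_chart adj y g.

Lemma card_chart_col_line j : #|chart_col y g j| = beta.+1.
Proof. by rewrite (card_chart_col drg_irr Hg) mulnC -beta_eq. Qed.

Lemma card_chart_row_le i : #|chart_row y g i| <= beta.
Proof. by rewrite (card_chart_row drg_irr Hg) mulnC. Qed.

Lemma clique_big_chart_col (L : {set T}) :
  is_clique adj L -> y \in L -> beta < #|L| -> exists j, L = chart_col y g j.
Proof.
move=> Lc yL L_big.
have : 0 < #|L :\ y| by move: L_big; rewrite (cardsD1 y L) yL; lia.
rewrite card_gt0 => /set0Pn [w]; rewrite !inE => /andP [wy wL].
have yw : y != w by rewrite eq_sym.
have [u ew] := chart_onto Hg ((cliqueP _ _ Lc) _ _ yL wL yw); subst w.
have [L_row|L_col] := clique_sub_chart_line drg_irr Hg Lc yL wL.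
  by have := subset_leq_card L_row; have := card_chart_row_le u.1.1; lia.
by exists u.1.2; apply/eqP; rewrite eqEcard L_col card_chart_col_line.
Qed.

Lemma mem_lines_chart (L : {set T}) :
  y \in L -> (L \in lines) = [exists j, L == chart_col y g j].
Proof.
move=> yL; apply/idP/existsP => [|[j /eqP ->]].
  rewrite inE => /andP [Lc /eqP cardL].
  by have [j ->] := clique_big_chart_col Lc yL (eq_leq (esym cardL)); exists j.
by rewrite inE (chart_col_clique drg_sym Hg) card_chart_col_line eqxx.
Qed.

Lemma card_lines_chart z :
  #|[set L in lines | (y \in L) && (z \in L)]| = (y == z) * r + adj y z.
Proof.
have [<-|yz] := eqVneq y z.
  have -> : [set L in lines | (y \in L) && (y \in L)] = chart_col y g @: setT.
    apply/setP => L; rewrite inE andbb; apply/andP/imsetP => [[+ yL]|[j _ ->]].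
      by rewrite (mem_lines_chart yL) => /existsP [j /eqP ->]; exists j.
    by rewrite (mem_lines_chart (setU11 _ _)) setU11; split => //; apply/existsP; exists j.
  rewrite (card_imset _ (chart_col_inj drg_irr Hg (ltnW m_gt1) Halpha)) cardsT card_ord.
  by rewrite drg_irr addn0 mul1n.
rewrite mul0n add0n; have [ayz|nayz] := boolP (adj y z).
  have [u ez] := chart_onto Hg ayz; subst z.
  have -> : [set L in lines | (y \in L) && (g u \in L)] = [set chart_col y g u.1.2].
    apply/setP => L; rewrite inE in_set1; apply/and3P/eqP => [[+ yL]|->].
      rewrite (mem_lines_chart yL) => /existsP [j /eqP ->].
      by rewrite (mem_chart_col drg_irr Hg) => /eqP ->.
    rewrite (mem_lines_chart (setU11 _ _)) (mem_chart_col drg_irr Hg) setU11.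
    by split => //; apply/existsP; exists u.1.2.
  by rewrite cards1.
apply/eqP; rewrite cards_eq0; apply/eqP/setP => L; rewrite !inE.
apply/negbTE/negP => /and3P [/andP [Lc _] yL zL].
by move: nayz; rewrite ((cliqueP _ _ Lc) _ _ yL zL yz).
Qed.

End Lines.

Lemma adj_eigenvalue_ge th : eigenvalue (adj_mx adj) th -> (0 <= th + r%:R)%R.
Proof.
apply: (eigenvalue_ge_lines (Ls := lines)) => y z.
by have [g Hg] := chart_exists y; exact: card_lines_chart Hg z.
Qed.

Section Geometric.
Variable Cs : {set {set T}}.
Hypothesis Hgeo : geometric adj (r * beta) Cs.

Lemma geometric_clique_card_gt (C : {set T}) : C \in Cs -> 1 < #|C| -> beta < #|C|.
Proof. by move=> CCs; apply: delsarte_clique_card_gt adj_eigenvalue_ge (Hgeo.1 C CCs). Qed.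

Lemma chart_col_in_Cs y (g : 'I_m * 'I_r * 'I_alpha -> T) j :
  local_chart adj y g -> chart_col y g j \in Cs.
Proof.
move=> Hg; pose u := ((Ordinal (ltnW m_gt1), j), Ordinal Halpha).
have [C [[CCs [yC uC]] _]] := Hgeo.2 y (g u) (chart_adj Hg u).
have C_gt1 : 1 < #|C|.
  rewrite (cardsD1 y) yC ltnS card_gt0; apply/set0Pn; exists (g u).
  by rewrite !inE uC (chart_neqy drg_irr Hg).
have Cc : is_clique adj C by have [] := Hgeo.1 C CCs.
have [j' eC] := clique_big_chart_col Hg Cc yC (geometric_clique_card_gt CCs C_gt1).
by move: uC; rewrite eC (mem_chart_col drg_irr Hg) => /eqP /= ->; rewrite -eC.
Qed.

Lemma chart_row_notin_Cs y (g : 'I_m * 'I_r * 'I_alpha -> T) i :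
  local_chart adj y g -> chart_row y g i \notin Cs.
Proof.
move=> Hg; apply/negP => /geometric_clique_card_gt; have := card_chart_row_le Hg i.
by rewrite (card_chart_row drg_irr Hg); move: Hr Halpha; nia.
Qed.

Lemma assembly_chart y (g : 'I_m * 'I_r * 'I_alpha -> T) (M : {set T}) :
  local_chart adj y g -> y \in M -> assembly adj Cs M = [exists i, M == chart_row y g i].
Proof.
move=> Hg yM; apply/idP/existsP => [/andP [Mmax M_Cs]|[i /eqP ->]].
  have [[i ->]|[j eM]] := maximal_clique_chart drg_sym drg_irr Hg Mmax yM (ltnW m_gt1).
    by exists i.
  by move: M_Cs; rewrite eM chart_col_in_Cs.
by rewrite /assembly chart_row_notin_Cs // andbT (chart_row_maximal drg_sym drg_irr Hg).
Qed.

Lemma card_assemblies_down j x y : 1 <= j <= D -> dist x y = j ->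
  #|[set M : {set T} | [&& assembly adj Cs M, y \in M & setdist adj x M == j.-1]]| =
    qint b j.
Proof.
move=> /andP [j_gt0 jD] xy; have [g Hg] := chart_exists y.
have -> : [set M : {set T} | [&& assembly adj Cs M, y \in M & setdist adj x M == j.-1]] =
          chart_row y g @: down_rows x j g.
  apply/setP => M; rewrite inE; apply/and3P/imsetP => [[+ yM /eqP Mx]|[i i_down ->]].
    rewrite (assembly_chart Hg yM) => /existsP [i /eqP eM]; subst M; exists i => //.
    have [z + xz] := setdist_witness drg_conn x yM; rewrite Mx in xz.
    case/setU1P => [ez|/imsetP [u + ez]]; first by move: xz; rewrite ez xy; lia.
    rewrite inE => /eqP ui; rewrite inE; apply/existsP; exists u.
    by rewrite ui eqxx -ez -xz eqxx.
  split; last by rewrite (setdist_down_row Hg xy i_down).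
    by rewrite (assembly_chart Hg (setU11 _ _)); apply/existsP; exists i.
  exact: setU11.
rewrite (card_imset _ (chart_row_inj drg_irr Hg (ltnW Hr) Halpha)).
exact: card_down_rows Hg xy jD (@nearest_layer_card_all j.-1) Hr.
Qed.

End Geometric.
End Main.

Theorem theorem26 (T : finType) (adj : rel T) (D b alpha beta : nat)
    (Cs : {set {set T}}) :
  drg_classical adj D b alpha beta ->
  2 <= b -> 1 <= alpha <= b - 1 -> 3 <= D ->
  geometric adj (qint b D * beta) Cs ->
  alpha %| beta ->
  (forall x : T, induced_iso_clique_ext_grid adj (nbhd adj x)
                   alpha (beta %/ alpha) (qint b D)) ->
  alpha * qint b D < beta ->
  [/\ (* (a) *)
      (forall (M : {set T}) (x : T), assembly adj Cs M ->
         #|[set y in M | dist adj x y == setdist adj x M]| =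
           1 + alpha * qint b (setdist adj x M)),
      (* (b) *)
      (forall (j : nat) (x y : T), 1 <= j <= D -> dist adj x y = j ->
         #|[set M : {set T} | [&& assembly adj Cs M, y \in M &
                                  setdist adj x M == j.-1]]| = qint b j)
    & (* (c) *)
      (forall (h : nat) (x y : T), h <= D.-1 -> dist adj x y = h ->
         induced_iso_clique_ext_grid adj (sphere adj h.+1 x :&: nbhd adj y)
           alpha (beta %/ alpha - qint b h) (qint b D - qint b h))].
Proof.
move=> Hdrg b_gt1 /andP [alpha_gt0 _] D_ge3 Hgeo alpha_dvd Hloc Hbig.
have Hr : 1 < qint b D by apply: qint_gt1; lia.
split=> [M x /andP [Mmax _] | j x y jD xy | h x y hD xy].
- exact: (nearest_in_maximal_clique Hdrg alpha_gt0 alpha_dvd Hr Hbig Hloc x Mmax).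
- exact: (card_assemblies_down Hdrg alpha_gt0 alpha_dvd Hr Hbig Hloc Hgeo jD xy).
- exact: (induced_up_layer Hdrg alpha_gt0 alpha_dvd Hr Hbig Hloc hD xy).
Qed.
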